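(* Let $E$ be a Banach space with $E = V \oplus W$ ($V, W$ linear subspaces), and let $\Phi\colon E \to \mathbb{R}$ be locally Lipschitz. For $w \in W$ set $\varphi(w) = \sup_{g \in V} \Phi(g+w)$ and $$V(w) = \{ v \in V : \Phi(v+w) = \max_{g \in V} \Phi(g+w) \}.$$ Assume: (a) for every $w \in W$, $V(w) \neq \varnothing$ (so $\varphi(w)=\Phi(v+w)$ for $v\in V(w)$); (b) the functional $\varphi\colon W \to \mathbb{R}$ is bounded below and attains its minimum at some point $\overline{w} \in W$; (c) there exists a continuous map $s\colon W \to V$ with $s(w) \in V(w)$ for all $w \in W$. Then $\overline{u} = s(\overline{w}) + \overline{w}$ is a critical point of $\Phi$, i.e. $0 \in \partial \Phi(\overline{u})$, and $$\Phi(\overline{u}) = \min_{w \in W} \max_{v \in V} \Phi(v+w).$$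
   Context: For a locally Lipschitz $\Phi\colon E\to\mathbb{R}$, the generalized directional derivative is $\Phi^\circ(x;v) = \limsup_{y \to x,\, t \downarrow 0} \frac{\Phi(y+tv) - \Phi(y)}{t}$, and the Clarke subdifferential is $\partial\Phi(x) = \{x^* \in E^* : \Phi^\circ(x;v) \ge \langle x^*, v\rangle \text{ for all } v \in E\}$. A point $x$ is a critical point of $\Phi$ if $0 \in \partial\Phi(x)$. *)

From HB Require Import structures.
From mathcomp Require Import all_boot all_order all_algebra.
From mathcomp Require Import all_classical all_reals all_analysis.
Set Implicit Arguments. Unset Strict Implicit. Unset Printing Implicit Defensive.
Import Order.TTheory GRing.Theory Num.Theory.
Import numFieldNormedType.Exports.
Local Open Scope classical_set_scope.
Local Open Scope ring_scope.

Section Defs.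
Context {R : realType} {E : normedModType R}.

Definition locally_lipschitz (Phi : E -> R) : Prop :=
  forall x : E, exists r : R, exists L : R, 0 < r /\
    forall y z : E, ball x r y -> ball x r z ->
      `|Phi y - Phi z| <= L * `|y - z|.

Definition lin_subspace (V : set E) : Prop :=
  V 0 /\ (forall u v, V u -> V v -> V (u + v)) /\
  (forall (a : R) u, V u -> V (a *: u)).

Definition direct_sum_decomp (V W : set E) : Prop :=
  (forall e : E, exists v w, V v /\ W w /\ e = v + w) /\ V `&` W = [set 0].

(* Clarke generalized directional derivative:
   limsup_{y -> x, t \downarrow 0} (Phi(y + t v) - Phi y) / t,
   written as inf over delta > 0 of the sup over y in ball x delta, 0 < t < delta. *)
Definition gen_dir_deriv (Phi : E -> R) (x v : E) : \bar R :=
  ereal_inf [set ereal_sup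
     [set ((Phi (yt.1 + yt.2 *: v) - Phi yt.1) / yt.2)%:E
        | yt in [set yt : E * R | ball x d yt.1 /\ 0 < yt.2 < d]]
   | d in [set d : R | 0 < d]].

Definition clarke_subdiff (Phi : E -> R) (x : E) : set (E -> R) :=
  [set f | (forall (a : R) (u v : E), f (a *: u + v) = a * f u + f v) /\
           continuous f /\
           forall v : E, ((f v)%:E <= gen_dir_deriv Phi x v)%E].

Definition critical_point (Phi : E -> R) (x : E) : Prop :=
  clarke_subdiff Phi x (fun _ => 0).

Definition varphi (Phi : E -> R) (V : set E) (w : E) : \bar R :=
  ereal_sup [set (Phi (g + w))%:E | g in V].

Definition Vmax (Phi : E -> R) (V : set E) (w : E) : set E :=
  [set v | V v /\ (Phi (v + w))%:E = varphi Phi V w].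

End Defs.

From HB Require Import structures.
From mathcomp Require Import all_boot all_order all_algebra.
From mathcomp Require Import all_classical all_reals all_analysis.
Import Order.TTheory GRing.Theory Num.Theory.
Import numFieldNormedType.Exports.
Local Open Scope classical_set_scope.
Local Open Scope ring_scope.

(* Write [ubar = s wbar + wbar] and split a direction as [v = v1 + w1] with
   [v1] in V, [w1] in W.  Along [w_t = wbar + t w1] the points
   [y_t = s w_t - t v1 + wbar] tend to [ubar] by continuity of [s], and
   [y_t + t v = s w_t + w_t].  Since [y_t - wbar] lies in V,
   [Phi y_t <= varphi wbar <= varphi w_t = Phi (y_t + t v)]: every difference
   quotient along this curve is nonnegative, so Clarke's derivative
   [Phi°(ubar; v)] is nonnegative for all [v], i.e. [0] is a Clarke
   subgradient at [ubar]. *)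

Lemma within_continuous_cvg_comp {T : Type} {U S : topologicalType}
    (A : set U) (s : U -> S) (F : set_system T) (g : T -> U) (x : U) :
  Filter F -> {within A, continuous s} -> A x ->
  g @ F --> x -> (forall t, A (g t)) -> s (g t) @[t --> F] --> s x.
Proof.
move=> FF sA Ax gx gA.
have gAx : g @ F --> within A (nbhs x).
  by move=> P /gx; apply: (@filterS _ F) => t /(_ (gA t)).
exact: (cvg_comp g s gAx ((subspace_continuousP A s).1 sA x Ax)).
Qed.

Section ClarkeDerivative.
Context {R : realType} {E : normedModType R}.
Implicit Types (Phi : E -> R) (x v : E).

Lemma gen_dir_deriv_ge0 Phi x v (y : R -> E) :
  y t @[t --> 0^'+] --> x ->
  (\forall t \near 0^'+, Phi (y t) <= Phi (y t + t *: v)) ->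
  (0%:E <= gen_dir_deriv Phi x v)%E.
Proof.
move=> yx Phi_incr; apply/ereal_infP => _ [d d0 <-].
have yx_d : \forall t \near 0^'+, `|x - y t| < d by move/cvgrPdist_lt : yx; exact.
have witness : \forall t \near 0^'+,
    [/\ ball x d (y t), 0 < t < d & Phi (y t) <= Phi (y t + t *: v)].
  near=> t; split; last by near: t.
  - by rewrite -ball_normE /ball_; near: t.
  - apply/andP; split; near: t; first exact: nbhs_right_gt.
    exact: nbhs_right_lt.
have [t [xyt /andP[t0 td] Phit]] := @filter_ex _ 0^'+ _ _ witness.
apply: le_trans (ereal_sup_ubound _); last by exists (y t, t) => //=; rewrite t0.
by rewrite lee_fin divr_ge0 ?subr_ge0 ?(ltW t0).
Unshelve. all: by end_near.
Qed.

Lemma gen_dir_deriv_ge0_critical_point Phi x :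
  (forall v, (0%:E <= gen_dir_deriv Phi x v)%E) -> critical_point Phi x.
Proof.
move=> Phi_ge0; split; first by move=> a u v; rewrite mulr0 addr0.
by split; [exact: cst_continuous | exact: Phi_ge0].
Qed.

End ClarkeDerivative.

Lemma lin_subspaceDZ {R : realType} {E : normedModType R} (U : set E) (a : R) u v :
  lin_subspace U -> U u -> U v -> U (u + a *: v).
Proof. by move=> [_ [UD UZ]] Uu Uv; apply: UD => //; exact: UZ. Qed.

Section SaddlePoint.
Context {R : realType} {E : normedModType R}.
Context {Phi : E -> R} {V W : set E} {s : E -> E} {wbar : E}.

Lemma le_varphi g w : V g -> ((Phi (g + w))%:E <= varphi Phi V w)%E.
Proof. by move=> Vg; apply: ereal_sup_ubound; exists g. Qed.

Hypothesis Wwbar : W wbar.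
Hypothesis varphi_min : forall w, W w -> (varphi Phi V wbar <= varphi Phi V w)%E.
Hypothesis s_Vmax : forall w, W w -> Vmax Phi V w (s w).

Lemma le_saddle g w : V g -> W w -> Phi (g + wbar) <= Phi (s w + w).
Proof.
move=> Vg Ww; rewrite -lee_fin (s_Vmax _ Ww).2.
exact: le_trans (le_varphi _ wbar Vg) (varphi_min _ Ww).
Qed.

Lemma saddle_minimax :
  (Phi (s wbar + wbar))%:E = ereal_inf [set varphi Phi V w | w in W].
Proof.
rewrite (s_Vmax _ Wwbar).2; apply/eqP; rewrite eq_le; apply/andP; split.
  by apply/ereal_infP => _ [w Ww <-]; exact: varphi_min.
by apply: ereal_inf_lbound; exists wbar.
Qed.

Hypotheses (linV : lin_subspace V) (linW : lin_subspace W).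
Hypothesis s_cont : {within W, continuous s}.

Lemma saddle_gen_dir_deriv_ge0 v1 w1 : V v1 -> W w1 ->
  (0%:E <= gen_dir_deriv Phi (s wbar + wbar)%R (v1 + w1)%R)%E.
Proof.
move=> Vv1 Ww1.
have W_line t : W (wbar + t *: w1) by exact: lin_subspaceDZ.
have scale_cvg (u : E) : t *: u @[t --> 0^'+] --> 0.
  by rewrite -(scale0r u); apply: cvg_at_right_filter; exact: cvgZ cvg_id (cvg_cst _).
have line_cvg : (wbar + t *: w1) @[t --> 0^'+] --> wbar.
  by rewrite -[X in _ --> X]addr0; exact: cvgD (cvg_cst _) (scale_cvg w1).
have s_line_cvg : s (wbar + t *: w1) @[t --> 0^'+] --> s wbar.
  exact: within_continuous_cvg_comp.
apply: (gen_dir_deriv_ge0 _ _ _ (fun t => s (wbar + t *: w1) - t *: v1 + wbar)).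
  have -> : s wbar + wbar = s wbar - 0 + wbar by rewrite subr0.
  exact: cvgD (cvgB s_line_cvg (scale_cvg v1)) (cvg_cst _).
apply: nearW => t.
have -> : s (wbar + t *: w1) - t *: v1 + wbar + t *: (v1 + w1)
        = s (wbar + t *: w1) + (wbar + t *: w1).
  by rewrite scalerDr addrACA subrK addrCA.
apply: le_saddle (W_line t); rewrite -scaleNr.
exact: lin_subspaceDZ (s_Vmax _ (W_line t)).1 Vv1.
Qed.

End SaddlePoint.

Theorem theorem8 (R : realType) (E : completeNormedModType R)
  (V W : set E) (Phi : E -> R) (s : E -> E) (wbar : E) :
  lin_subspace V -> lin_subspace W -> direct_sum_decomp V W ->
  locally_lipschitz Phi ->
  (* (a) *)
  (forall w, W w -> Vmax Phi V w !=set0) ->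
  (* (b) *)
  (exists m : R, forall w, W w -> (m%:E <= varphi Phi V w)%E) ->
  W wbar -> (forall w, W w -> (varphi Phi V wbar <= varphi Phi V w)%E) ->
  (* (c) *)
  {within W, continuous s} ->
  (forall w, W w -> Vmax Phi V w (s w)) ->
  critical_point Phi (s wbar + wbar) /\
  (Phi (s wbar + wbar))%:E = ereal_inf [set varphi Phi V w | w in W].
Proof.
move=> linV linW [decomp _] _ _ _ Wwbar varphi_min s_cont s_Vmax; split.
  apply: gen_dir_deriv_ge0_critical_point => v.
  have [v1 [w1 [Vv1 [Ww1 ->]]]] := decomp v.
  exact: (saddle_gen_dir_deriv_ge0 Wwbar varphi_min s_Vmax linV linW s_cont _ _ Vv1 Ww1).
exact: saddle_minimax.
Qed.
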